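(* Let $1\le s\le n$, $0<\gamma<1$, and let $\mathbf{D}=[\mathbf{d}_1,\dots,\mathbf{d}_n]\in\mathbb{R}^{d\times n}$ be any matrix with $\max\{\|\mathbf{d}_i\|_2^2:i\in[n]\}\le\rho$. Then \[ w(\mathbf{D}S_\gamma)\ \le\ 6\gamma^{-1}\sqrt{s\rho\log(\sqrt2\,n/s)}. \]
   Context: $S_\gamma:=\{\mathbf{x}\in\mathbb{R}^n:\|\mathbf{x}\|_2=1,\ \|\mathbf{x}_T\|_1\ge\gamma\|\mathbf{x}_{T^c}\|_1\text{ for some }T\subset[n],|T|\le s\}$, where $\mathbf{x}_T$ agrees with $\mathbf{x}$ on $T$ and is $0$ elsewhere. $\mathbf{D}S_\gamma=\{\mathbf{D}\mathbf{x}:\mathbf{x}\in S_\gamma\}$, and $w(T)=\mathbb{E}\sup_{\mathbf{x}\in T}\langle\mathbf{g},\mathbf{x}\rangle$ with $\mathbf{g}\sim N(\mathbf{0},\mathbf{I}_d)$ is the Gaussian width. *)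

From HB Require Import structures.
From mathcomp Require Import all_boot all_order all_algebra.
From mathcomp Require Import all_classical all_reals all_analysis.
From mathcomp Require Import normal_distribution.
Set Implicit Arguments. Unset Strict Implicit. Unset Printing Implicit Defensive.
Import Order.TTheory GRing.Theory Num.Theory.
Local Open Scope classical_set_scope.
Local Open Scope ring_scope.

(* Expectation E[f(g)] for g ~ N(0, I_d), g a row vector in R^d, computed as
   the iterated integral over the d independent standard normal coordinates. *)
Fixpoint gauss_expect {R : realType} (d : nat) : ('rV[R]_d -> \bar R) -> \bar R :=
  match d return ('rV[R]_d -> \bar R) -> \bar R with
  | 0 => fun f => f 0
  | d'.+1 => fun f =>
      (\int[normal_prob (0:R) 1]_x
         gauss_expect (fun v : 'rV[R]_d' => f (row_mx (\row_(j < 1) x) v)))%E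
  end.

Definition inner {R : realType} {d : nat} (u v : 'rV[R]_d) : R :=
  \sum_(i < d) u 0 i * v 0 i.

Definition gaussian_width {R : realType} {d : nat} (A : set 'rV[R]_d) : \bar R :=
  gauss_expect (fun g => ereal_sup [set (inner g y)%:E | y in A]).

Definition S_gamma {R : realType} (n s : nat) (gamma : R) : set 'rV[R]_n :=
  [set x | \sum_(i < n) x 0 i ^+ 2 = 1 /\
     exists T : {set 'I_n}, (#|T| <= s)%N /\
       \sum_(i in T) `|x 0 i| >= gamma * \sum_(i in ~: T) `|x 0 i| ].

Definition DS_gamma {R : realType} (d n s : nat) (D : 'M[R]_(d, n)) (gamma : R)
  : set 'rV[R]_d :=
  [set (D *m x^T)^T | x in S_gamma s gamma].

From HB Require Import structures.
From mathcomp Require Import all_boot all_order all_algebra.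
From mathcomp Require Import all_classical all_reals all_analysis.
From mathcomp Require Import normal_distribution measurable_realfun.
From mathcomp Require Import ring lra.
Import Order.TTheory GRing.Theory Num.Theory.
Local Open Scope classical_set_scope.
Local Open Scope ring_scope.

(* For x in S_gamma write <g, D x> = sum_i x_i v_i with v_i = <d_i, g>.  The cone
   condition gives ||x||_1 <= (1 + 1/gamma) sqrt s, and thresholding |v_i| at tau gives
     x_i v_i <= tau |x_i| + t/2 x_i^2 + e^(-mu tau) (e^(mu v_i) + e^(-mu v_i)) / (t mu^2).
   Since ||x||_2 = 1, the supremum over S_gamma is thus dominated by a nonnegative
   combination of exponentials of linear forms in g, whose Gaussian expectation is
   explicit: E e^<a, g> = e^(|a|^2 / 2).  Choosing tau, mu and t of the order of
   sqrt (rho log (sqrt 2 n / s)) (and tau = 0 when n <= 2 s) gives the bound. *)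

Section gaussian_expectation.
Context {R : realType}.
Local Notation mu := (@lebesgue_measure R).

Lemma ge0_integral_normal_prob (f : R -> \bar R) :
  (forall x, (0 <= f x)%E) -> measurable_fun setT f ->
  (\int[normal_prob 0 1]_x f x = \int[mu]_x (f x * (normal_pdf 0 1 x)%:E))%E.
Proof.
move=> f0 mf; have dom := @normal_prob_dominates R 0 1.
rewrite -(Radon_Nikodym_SigmaFinite.change_of_variables dom) //.
have int_dN := Radon_Nikodym_SigmaFinite.f_integrable dom.
have m_pdf : measurable_fun setT (fun x => (normal_pdf 0 1 x : R)%:E).
  by apply/measurableT_comp => //; exact: measurable_normal_pdf.
apply: ae_eq_integral => //.
- by apply: emeasurable_funM => //; exact: (measurable_int mu).
- exact: emeasurable_funM.
- apply: ae_eqe_mul2l; apply: integral_ae_eq => // A _ mA.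
  by rewrite -Radon_Nikodym_SigmaFinite.f_integral.
Qed.

Lemma integral_normal_prob_expR (b : R) :
  (\int[normal_prob 0 1]_x (expR (b * x))%:E = (expR (b ^+ 2 / 2))%:E)%E.
Proof.
rewrite ge0_integral_normal_prob //; last first.
  by apply/measurable_EFinP; apply: measurableT_comp => //; exact: measurable_funM.
(* completing the square: e^(b x) N(0,1)(x) = e^(b^2/2) N(b,1)(x) *)
transitivity (\int[mu]_x ((expR (b ^+ 2 / 2))%:E * (normal_pdf b 1 x)%:E))%E.
  apply: eq_integral => x _; rewrite -!EFinM; congr EFin.
  rewrite /normal_pdf oner_eq0 /= /normal_fun mulrCA [RHS]mulrCA -!expRD.
  by congr (_ * expR _); rewrite expr1n; field.
rewrite integralZl //; last exact: integrable_normal_pdf.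
by rewrite integral_normal_pdf mule1.
Qed.

Lemma integral_normal_prob_sum_expR (I : finType) (c b : I -> R) :
  (forall i, 0 <= c i) ->
  (\int[normal_prob 0 1]_x (\sum_i c i * expR (b i * x))%:E =
   (\sum_i c i * expR (b i ^+ 2 / 2))%:E)%E.
Proof.
move=> c0.
under eq_integral do rewrite -sumEFin.
rewrite ge0_integral_sum //; last 2 first.
- move=> i; apply/measurable_EFinP/measurable_funM => //.
  by apply: measurableT_comp => //; exact: measurable_funM.
- by move=> i x _; rewrite lee_fin mulr_ge0 ?expR_ge0.
rewrite -sumEFin; apply: eq_bigr => i _.
under eq_integral do rewrite EFinM.
rewrite ge0_integralZl ?lee_fin ?integral_normal_prob_expR ?EFinM //.
by apply/measurable_EFinP/measurableT_comp => //; exact: measurable_funM.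
Qed.

(* the integrands of [gauss_expect] are suprema and need not be measurable *)
Lemma le_integral_pointwise d (T : measurableType d)
    (nu : {measure set T -> \bar R}) (A : set T) (f g : T -> \bar R) :
  (forall x, f x <= g x)%E ->
  (\int[nu]_(x in A) f x <= \int[nu]_(x in A) g x)%E.
Proof.
move=> fg; rewrite /integral; apply: leeB.
- apply: ereal_sup_le => _ [h hf <-]; exists h => // x.
  apply: le_trans (hf x) _; rewrite /patch !funeposE.
  by case: (x \in A) => //; rewrite ge_max !le_max fg lexx !orbT.
- apply: ereal_sup_le => _ [h hf <-]; exists h => // x.
  apply: le_trans (hf x) _; rewrite /patch !funenegE.
  by case: (x \in A) => //; rewrite ge_max !le_max leeN2 fg lexx !orbT.
Qed.

Lemma le_gauss_expect d (f g : 'rV[R]_d -> \bar R) :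
  (forall v, f v <= g v)%E -> (gauss_expect f <= gauss_expect g)%E.
Proof.
elim: d f g => [|d IH] f g fg /=; first exact: fg.
by apply: le_integral_pointwise => x; apply: IH => v; exact: fg.
Qed.

Lemma gauss_expect_cst d (r : \bar R) : gauss_expect (fun _ : 'rV[R]_d => r) = r.
Proof.
elim: d => [|d IH] //=; rewrite IH integral_cst //.
by rewrite [X in (_ * X)%E](_ : _ = 1%E) ?mule1 //; exact: integral_normal_pdf.
Qed.

End gaussian_expectation.

Section inner_product.
Context {R : realType}.

Lemma inner_row_mx d (a : 'rV[R]_(1 + d)) (x : R) (v : 'rV[R]_d) :
  inner a (row_mx (\row_(j < 1) x) v) = a 0 ord0 * x + inner (rsubmx a) v.
Proof.
rewrite /inner big_split_ord /= big_ord1 row_mxEl mxE; congr (a 0 _ * _ + _).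
  exact: val_inj.
by apply: eq_bigr => i _; rewrite row_mxEr mxE.
Qed.

Lemma inner_self_rsubmx d (a : 'rV[R]_(1 + d)) :
  inner a a = a 0 ord0 ^+ 2 + inner (rsubmx a) (rsubmx a).
Proof.
rewrite /inner big_split_ord /= big_ord1 expr2; congr (a 0 _ * a 0 _ + _).
- exact: val_inj.
- exact: val_inj.
- by apply: eq_bigr => i _; rewrite !mxE.
Qed.

Lemma innerZl d (k : R) (a g : 'rV[R]_d) : inner (k *: a) g = k * inner a g.
Proof. by rewrite /inner mulr_sumr; apply: eq_bigr => i _; rewrite mxE mulrA. Qed.

Lemma innerZr d (k : R) (a g : 'rV[R]_d) : inner a (k *: g) = k * inner a g.
Proof. by rewrite /inner mulr_sumr; apply: eq_bigr => i _; rewrite mxE mulrCA. Qed.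

Lemma inner0l d (g : 'rV[R]_d) : inner 0 g = 0.
Proof. by rewrite /inner big1 // => i _; rewrite mxE mul0r. Qed.

Lemma inner0r d (a : 'rV[R]_d) : inner a 0 = 0.
Proof. by rewrite /inner big1 // => i _; rewrite mxE mulr0. Qed.

Lemma inner_mulmx_tr d n (D : 'M[R]_(d, n)) (g : 'rV[R]_d) (x : 'rV[R]_n) :
  inner g ((D *m x^T)^T) = \sum_i x 0 i * inner (col i D)^T g.
Proof.
rewrite /inner; under eq_bigr do rewrite !mxE mulr_sumr.
rewrite exchange_big /=; apply: eq_bigr => i _; rewrite mulr_sumr.
by apply: eq_bigr => j _; rewrite !mxE; ring.
Qed.

Lemma inner_col_self d n (D : 'M[R]_(d, n)) i :
  inner (col i D)^T (col i D)^T = \sum_j D j i ^+ 2.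
Proof. by apply: eq_bigr => j _; rewrite !mxE expr2. Qed.

Lemma gauss_expect_sum_expR d (I : finType) (c : I -> R) (a : I -> 'rV[R]_d) :
  (forall i, 0 <= c i) ->
  gauss_expect (fun g => (\sum_i c i * expR (inner (a i) g))%:E) =
  (\sum_i c i * expR (inner (a i) (a i) / 2))%:E.
Proof.
elim: d c a => [|d IH] c a c0 /=.
  by congr EFin; apply: eq_bigr => i _; rewrite /inner !big_ord0 mul0r.
pose a' i := rsubmx (a i : 'rV_(1 + d)).
have c'0 i : 0 <= c i * expR (inner (a' i) (a' i) / 2) by rewrite mulr_ge0 ?expR_ge0.
transitivity (\int[normal_prob 0 1]_x
  (\sum_i c i * expR (inner (a' i) (a' i) / 2) * expR (a i 0 ord0 * x))%:E)%E.
  apply: eq_integral => x _.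
  rewrite (_ : (fun v => _) = fun v =>
    (\sum_i c i * expR (a i 0 ord0 * x) * expR (inner (a' i) v))%:E).
    rewrite IH => [|i]; last by rewrite mulr_ge0 ?expR_ge0.
    by congr EFin; apply: eq_bigr => i _; rewrite mulrAC.
  by apply/funext => v; congr EFin; apply: eq_bigr => i _; rewrite inner_row_mx expRD mulrA.
rewrite integral_normal_prob_sum_expR //; congr EFin; apply: eq_bigr => i _.
by rewrite -mulrA -expRD inner_self_rsubmx mulrDl addrC.
Qed.

End inner_product.

Section threshold_inequalities.
Context {R : realType}.

Lemma sqr_le_expR (p m : R) : 0 <= p -> 0 < m ->
  p ^+ 2 <= 2 / m ^+ 2 * expR (m * p).
Proof.
move=> p0 m0; have := expR_ge1Dxn 1 (mulr_ge0 (ltW m0) p0).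
rewrite (_ : 2`!%:R = 2 :> R) // => e_ge.
rewrite mulrAC ler_pdivlMr ?exprn_gt0 // -exprMn (mulrC p); lra.
Qed.

Lemma expR_normr_le (v : R) : expR `|v| <= expR v + expR (- v).
Proof.
have [v0|v0] := lerP 0 v.
- by rewrite ger0_norm // lerDl expR_ge0.
- by rewrite ltr0_norm // lerDr expR_ge0.
Qed.

(* above the threshold tau, the excess |v| - tau is paid for by AM-GM against x^2
   and then by an exponential moment of v *)
Lemma mul_le_threshold (x v tau mu t : R) : 0 <= tau -> 0 < mu -> 0 < t ->
  x * v <= tau * `|x| + t / 2 * x ^+ 2 +
    expR (- (mu * tau)) / (t * mu ^+ 2) * (expR (mu * v) + expR (- (mu * v))).
Proof.
move=> tau0 mu0 t0.
set C := expR (- (mu * tau)) / (t * mu ^+ 2).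
have tmu_gt0 : 0 < t * mu ^+ 2 by rewrite mulr_gt0 ?exprn_gt0.
have C0 : 0 <= C by rewrite divr_ge0 ?expR_ge0 ?ltW.
have S0 : 0 <= expR (mu * v) + expR (- (mu * v)) by rewrite addr_ge0 ?expR_ge0.
have x2_ge0 : 0 <= t / 2 * x ^+ 2 by rewrite mulr_ge0 ?sqr_ge0 ?divr_ge0 ?ltW.
have xv : x * v <= `|x| * `|v| by rewrite -normrM ler_norm.
have [v_le|v_gt] := lerP `|v| tau.
  have : `|x| * `|v| <= tau * `|x| by rewrite mulrC ler_wpM2r.
  have := mulr_ge0 C0 S0; lra.
set p := `|v| - tau; have p0 : 0 <= p by rewrite subr_ge0 ltW.
have amgm : `|x| * p <= t / 2 * x ^+ 2 + p ^+ 2 / (2 * t).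
  rewrite -real_normK ?num_real // -subr_ge0.
  rewrite (_ : _ - _ = (t * `|x| - p) ^+ 2 / (2 * t)); last by field; rewrite gt_eqF.
  by rewrite divr_ge0 ?sqr_ge0 // mulr_ge0 ?ltW.
have tail : p ^+ 2 / (2 * t) <= C * (expR (mu * v) + expR (- (mu * v))).
  have e_le : expR (mu * p) <= expR (- (mu * tau)) * (expR (mu * v) + expR (- (mu * v))).
    have -> : mu * p = - (mu * tau) + `|mu * v| by rewrite normrM gtr0_norm // /p; ring.
    by rewrite expRD ler_wpM2l ?expR_ge0 ?expR_normr_le.
  apply: (@le_trans _ _ (2 / mu ^+ 2 * expR (mu * p) / (2 * t))).
    by rewrite ler_pM2r ?invr_gt0 ?mulr_gt0 //; exact: sqr_le_expR.
  rewrite (_ : _ / (2 * t) = expR (mu * p) / (t * mu ^+ 2)); last first.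
    by field; rewrite !gt_eqF.
  by rewrite /C mulrAC ler_pM2r ?invr_gt0.
have : `|x| * `|v| = tau * `|x| + `|x| * p by rewrite /p; ring.
lra.
Qed.

Lemma normr_le_amgm (x q : R) : 0 < q -> `|x| <= (q * x ^+ 2 + q^-1) / 2.
Proof.
move=> q0; rewrite -subr_ge0 -real_normK ?num_real //.
rewrite (_ : _ - _ = (q * `|x| - 1) ^+ 2 / q / 2); last by field; rewrite gt_eqF.
by rewrite !divr_ge0 ?sqr_ge0 ?ltW.
Qed.

Lemma S_gamma_l1 n s (gamma : R) (x : 'rV[R]_n) :
  (0 < s)%N -> 0 < gamma -> S_gamma s gamma x ->
  \sum_i `|x 0 i| <= (1 + gamma^-1) * Num.sqrt s%:R.
Proof.
move=> s0 g0 [x1 [T [Ts hT]]]; set q := Num.sqrt s%:R.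
have q0 : 0 < q by rewrite sqrtr_gt0 ltr0n.
have splitT (F : 'I_n -> R) :
    \sum_i F i = \sum_(i in T) F i + \sum_(i in ~: T) F i.
  by rewrite (bigID (mem T)) /=; congr (_ + _); apply: eq_bigl => i; rewrite inE.
have sqT : \sum_(i in T) x 0 i ^+ 2 <= 1.
  by rewrite -x1 (splitT (fun i => x 0 i ^+ 2)) lerDl sumr_ge0 // => i _; exact: sqr_ge0.
have l1T : \sum_(i in T) `|x 0 i| <= q.
  apply: (@le_trans _ _ (\sum_(i in T) (q * x 0 i ^+ 2 + q^-1) / 2)).
    by apply: ler_sum => i _; exact: normr_le_amgm.
  rewrite -mulr_suml big_split /= -mulr_sumr sumr_const ler_pdivrMr //.
  have : q^-1 *+ #|T| <= q.
    by rewrite -mulr_natr ler_pdivrMl // -expr2 sqr_sqrtr ?ler_nat ?ler0n.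
  have : q * \sum_(i in T) x 0 i ^+ 2 <= q by rewrite ger_pMr.
  lra.
have l1Tc : \sum_(i in ~: T) `|x 0 i| <= gamma^-1 * q.
  by rewrite ler_pdivlMl // (le_trans hT) // ler_wpM2l ?ltW.
by rewrite (splitT (fun i => `|x 0 i|)) mulrDl mul1r lerD.
Qed.

End threshold_inequalities.

Section gaussian_width_bound.
Context {R : realType}.

Lemma gauss_expect_cosh_sum_le d n (D : 'M[R]_(d, n)) (K C mu rho : R) :
  0 <= K -> 0 <= C -> (forall i, \sum_j D j i ^+ 2 <= rho) ->
  (gauss_expect (fun g => (K + \sum_i C *
     (expR (mu * inner (col i D)^T g) + expR (- (mu * inner (col i D)^T g))))%:E) <=
   (K + 2 * n%:R * C * expR (mu ^+ 2 * rho / 2))%:E)%E.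
Proof.
move=> K0 C0 hD; pose dcol i := (col i D)^T.
pose a (k : ('I_n + 'I_n) + 'I_1) : 'rV[R]_d :=
  match k with inl (inl i) => mu *: dcol i | inl (inr i) => - mu *: dcol i
             | inr _ => 0 end.
pose w (k : ('I_n + 'I_n) + 'I_1) := if k is inr _ then K else C.
have sumE (F : ('I_n + 'I_n) + 'I_1 -> R) :
    \sum_k F k = \sum_i F (inl (inl i)) + \sum_i F (inl (inr i)) + F (inr ord0).
  by rewrite big_sumType /= big_sumType /= big_ord1.
rewrite (_ : (fun g => _) = fun g => (\sum_k w k * expR (inner (a k) g))%:E); last first.
  apply/funext => g; congr EFin; rewrite sumE /= inner0l expR0 mulr1 addrC -big_split.
  by congr (_ + _); apply: eq_bigr => i _; rewrite !innerZl mulNr mulrDr.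
rewrite gauss_expect_sum_expR; last by case=> [[]|].
rewrite lee_fin sumE /= inner0l mul0r expR0 mulr1 addrC lerD2l -big_split /=.
rewrite (_ : 2 * _ * _ * _ = \sum_(i < n) 2 * C * expR (mu ^+ 2 * rho / 2)); last first.
  by rewrite sumr_const card_ord -mulr_natl; ring.
apply: ler_sum => i _.
have col_le (k : R) : k ^+ 2 = mu ^+ 2 ->
    C * expR (inner (k *: dcol i) (k *: dcol i) / 2) <= C * expR (mu ^+ 2 * rho / 2).
  move=> k2; rewrite innerZl innerZr mulrA -expr2 k2 inner_col_self.
  by rewrite ler_wpM2l // ler_expR ler_pM2r // ler_wpM2l ?sqr_ge0.
have := col_le mu erefl; have := col_le (- mu) (sqrrN mu); lra.
Qed.

Definition width_majorant (n c rho tau mu t : R) : R :=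
  c * tau + t / 2 + 2 * n * expR (mu ^+ 2 * rho / 2 - mu * tau) / (t * mu ^+ 2).

Lemma gaussian_width_mulmx_le d n (D : 'M[R]_(d, n)) (X : set 'rV[R]_n)
    (c rho tau mu t : R) :
  0 <= c -> 0 <= tau -> 0 < mu -> 0 < t ->
  (forall x, X x -> \sum_i x 0 i ^+ 2 <= 1 /\ \sum_i `|x 0 i| <= c) ->
  (forall i, \sum_j D j i ^+ 2 <= rho) ->
  (gaussian_width [set (D *m x^T)^T | x in X] <=
   (width_majorant n%:R c rho tau mu t)%:E)%E.
Proof.
move=> c0 tau0 mu0 t0 hX hD.
set C := expR (- (mu * tau)) / (t * mu ^+ 2).
have C0 : 0 <= C by rewrite divr_ge0 ?expR_ge0 // mulr_ge0 ?ltW ?exprn_gt0.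
have K0 : 0 <= c * tau + t / 2 by apply: addr_ge0; [exact: mulr_ge0 | rewrite divr_ge0 ?ltW].
rewrite /width_majorant (_ : 2 * _ * _ / _ = 2 * n%:R * C * expR (mu ^+ 2 * rho / 2)); last first.
  by rewrite /C expRD; field; rewrite !gt_eqF ?exprn_gt0.
apply: (le_trans _ (gauss_expect_cosh_sum_le _ _ _ _ _ mu _ K0 C0 hD)).
apply: le_gauss_expect => g; apply: ge_ereal_sup => _ [_ [x Xx <-] <-].
have [x2 x1] := hX x Xx; rewrite lee_fin inner_mulmx_tr.
apply: (@le_trans _ _ (\sum_i (tau * `|x 0 i| + t / 2 * x 0 i ^+ 2 +
    C * (expR (mu * inner (col i D)^T g) + expR (- (mu * inner (col i D)^T g)))))).
  by apply: ler_sum => i _; exact: mul_le_threshold.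
rewrite !big_split /= lerD2r -!mulr_sumr [c * _]mulrC.
by apply: lerD; [exact: ler_wpM2l | rewrite ger_pMr ?divr_gt0].
Qed.

Lemma gaussian_width_mulmx_le0 d n (D : 'M[R]_(d, n)) (X : set 'rV[R]_n) :
  (forall i, \sum_j D j i ^+ 2 <= 0) ->
  (gaussian_width [set (D *m x^T)^T | x in X] <= 0)%E.
Proof.
move=> hD; have -> : D = 0.
  apply/matrixP => j i; rewrite mxE; apply/eqP; rewrite -sqrf_eq0.
  have /eqP/psumr_eq0P -> // : \sum_j D j i ^+ 2 == 0.
    by rewrite eq_le hD sumr_ge0 // => k _; exact: sqr_ge0.
  by move=> k _; exact: sqr_ge0.
rewrite -[leRHS](gauss_expect_cst d); apply: le_gauss_expect => g.
by apply: ge_ereal_sup => _ [_ [x _ <-] <-]; rewrite mul0mx trmx0 inner0r.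
Qed.

End gaussian_width_bound.

Section parameter_choice.
Context {R : realType}.

Lemma sqrt2_bounds : 7 / 5 <= Num.sqrt (2 : R) <= 3 / 2.
Proof.
have r0 : 0 <= Num.sqrt 2 :> R by exact: sqrtr_ge0.
have r2 : Num.sqrt 2 ^+ 2 = 2 :> R by rewrite sqr_sqrtr.
by apply/andP; split; nra.
Qed.

Lemma ln_ge1BV (y : R) : 0 < y -> 1 - y^-1 <= ln y.
Proof. by move=> y0; have := expR_ge1Dx (- ln y); rewrite expRN lnK ?posrE //; lra. Qed.

Lemma expR_half_le2 : expR (2^-1) <= 2 :> R.
Proof.
have := ler_wpM2l (expR_ge0 2^-1) (expR_ge1Dx (- 2^-1 : R)).
by rewrite -expRD subrr expR0; lra.
Qed.

Lemma ln_ratio_ge_half (s n : R) : 0 < s -> 2 * s <= n ->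
  2^-1 <= ln (Num.sqrt 2 * n / s).
Proof.
move=> s0 sn; have /andP[r_ge _] := sqrt2_bounds.
have r_gt0 : 0 < Num.sqrt 2 :> R by lra.
have y_gt0 : 0 < Num.sqrt 2 * n / s by rewrite divr_gt0 // mulr_gt0 //; lra.
apply: (@le_trans _ _ (1 - (Num.sqrt 2 * n / s)^-1)); last exact: ln_ge1BV.
rewrite invf_div.
suff : s / (Num.sqrt 2 * n) <= 2^-1 by lra.
by rewrite ler_pdivrMr ?mulr_gt0 //; nra.
Qed.

Lemma le_ln_ratio_small (s n : R) : 0 < s -> s <= n -> n <= 2 * s ->
  2 * n <= 9 * s * ln (Num.sqrt 2 * n / s).
Proof.
move=> s0 sn ns; have /andP[r_ge _] := sqrt2_bounds.
set r := Num.sqrt 2 in r_ge *.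
have y_gt0 : 0 < r * n / s by rewrite divr_gt0 // mulr_gt0 //; lra.
apply: (@le_trans _ _ (9 * s * (1 - (r * n / s)^-1))); last first.
  by apply: ler_wpM2l; [lra | exact: ln_ge1BV].
rewrite invf_div -(ler_pM2r (_ : 0 < r * n)); last by rewrite mulr_gt0; lra.
rewrite (_ : _ * (_ - _) * _ = 9 * r * s * n - 9 * s ^+ 2); last by field; lra.
(* (n - s) (2 s - n) >= 0 on [s, 2 s], and r >= 9/7 absorbs the rest *)
have band : 0 <= (n - s) * (2 * s - n) * r by rewrite !mulr_ge0 ?subr_ge0 //; lra.
have above : 0 <= s * (n - s) * r by rewrite !mulr_ge0 ?subr_ge0 //; lra.
have r_large : 0 <= s ^+ 2 * (7 * r - 9) by rewrite mulr_ge0 ?sqr_ge0 //; lra.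
lra.
Qed.

Lemma width_majorant_small (s n rho g l : R) :
  0 < n -> 0 < rho -> 1 <= g -> 2 * n <= 9 * s * l ->
  width_majorant n ((1 + g) * Num.sqrt s) rho 0 (Num.sqrt rho)^-1
    (Num.sqrt (8 * n * rho)) <= 6 * g * Num.sqrt (s * rho * l).
Proof.
move=> n0 rho0 g1 hl; set t := Num.sqrt (8 * n * rho).
have t0 : 0 < t by rewrite sqrtr_gt0 !mulr_gt0.
have t2 : t ^+ 2 = 8 * n * rho by rewrite sqr_sqrtr // ltW // !mulr_gt0.
have X0 : 0 <= s * rho * l by rewrite mulrAC mulr_ge0 ?ltW //; lra.
have t_le : t <= 6 * Num.sqrt (s * rho * l).
  rewrite -ler_sqr ?nnegrE ?(ltW t0) ?mulr_ge0 ?sqrtr_ge0 ?ler0n //.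
  rewrite t2 exprMn sqr_sqrtr //; have := ler_wpM2r (ltW rho0) hl; lra.
have : 6 * Num.sqrt (s * rho * l) <= 6 * g * Num.sqrt (s * rho * l).
  by rewrite -[6 * g * _]mulrA ler_wpM2l ?ler0n // ler_peMl ?sqrtr_ge0.
rewrite /width_majorant !mulr0 subr0 add0r exprVn sqr_sqrtr; last exact: ltW.
rewrite mulVf ?gt_eqF // mul1r (_ : 2 * n * _ / _ = t / 4 * expR 2^-1); last first.
  rewrite (_ : t / 4 = t ^+ 2 / (4 * t)); last by field; rewrite gt_eqF.
  by rewrite t2; field; rewrite !gt_eqF.
have := ler_wpM2l (divr_ge0 (ltW t0) (ler0n _ 4)) expR_half_le2; lra.
Qed.

Lemma width_majorant_large (s n rho g l : R) :
  0 < s -> 0 < rho -> 1 <= g -> 2^-1 <= l -> expR l = Num.sqrt 2 * n / s ->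
  width_majorant n ((1 + g) * Num.sqrt s) rho (Num.sqrt (2 * rho * l))
    (Num.sqrt (2 * l / rho)) (Num.sqrt (s * rho / l)) <=
  6 * g * Num.sqrt (s * rho * l).
Proof.
move=> s0 rho0 g1 l_ge el.
have l0 : 0 < l by apply: lt_le_trans l_ge; rewrite invr_gt0.
have /andP[r_ge r_le] := sqrt2_bounds.
set r := Num.sqrt (2 : R) in r_ge r_le el *.
set q := Num.sqrt s; set sg := Num.sqrt rho; set a := Num.sqrt l.
have r0 : 0 < r by lra.
have q0 : 0 < q by rewrite sqrtr_gt0.
have sg0 : 0 < sg by rewrite sqrtr_gt0.
have a0 : 0 < a by rewrite sqrtr_gt0.
have [r2 q2 sg2 a2] : [/\ r ^+ 2 = 2, q ^+ 2 = s, sg ^+ 2 = rho & a ^+ 2 = l].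
  by split; rewrite sqr_sqrtr // ltW.
have [rho_ge0 s_ge0 l_ge0] := And3 (ltW rho0) (ltW s0) (ltW l0).
have -> : Num.sqrt (2 * rho * l) = r * sg * a by rewrite !sqrtrM ?mulr_ge0 ?ler0n.
have -> : Num.sqrt (2 * l / rho) = r * a / sg.
  by rewrite !sqrtrM ?sqrtrV ?mulr_ge0 ?ler0n.
have -> : Num.sqrt (s * rho / l) = q * sg / a by rewrite !sqrtrM ?sqrtrV ?mulr_ge0.
have -> : Num.sqrt (s * rho * l) = q * sg * a by rewrite !sqrtrM ?mulr_ge0.
have n0 : 0 < n.
  have : 0 < r * n / s by rewrite -el expR_gt0.
  by rewrite pmulr_lgt0 ?invr_gt0 // pmulr_rgt0.
rewrite /width_majorant.
have -> : (r * a / sg) ^+ 2 * rho / 2 - r * a / sg * (r * sg * a) = - l.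
  rewrite -sg2 -a2 (_ : _ - _ = - (r ^+ 2 * a ^+ 2) / 2); last by field; rewrite gt_eqF.
  by rewrite r2; field.
have -> : (1 + g) * q * (r * sg * a) + q * sg / a / 2 +
    2 * n * expR (- l) / (q * sg / a * (r * a / sg) ^+ 2) =
    q * sg * a * (r * (1 + g) + l^-1 / 2 + r^-1 * l^-1).
  rewrite expRN el !exprMn r2 -a2 -q2; field.
  by rewrite !gt_eqF.
rewrite [6 * g * _]mulrC; apply: ler_wpM2l; first exact: ltW (mulr_gt0 (mulr_gt0 q0 sg0) a0).
have il_le : l^-1 <= 2 by rewrite -(ler_pM2l l0) mulfV ?gt_eqF //; lra.
have ir_le : r^-1 <= 1 by rewrite invf_le1 //; lra.
have : r^-1 * l^-1 <= 1 * 2 by apply: ler_pM => //; rewrite invr_ge0; exact: ltW.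
have : r * g <= 3 / 2 * g by apply: ler_wpM2r => //; lra.
lra.
Qed.

End parameter_choice.

Theorem theorem4p8 (R : realType) (d n s : nat) (gamma rho : R)
  (D : 'M[R]_(d, n)) :
  (1 <= s)%N -> (s <= n)%N -> 0 < gamma -> gamma < 1 ->
  (forall i : 'I_n, \sum_(j < d) D j i ^+ 2 <= rho) ->
  (gaussian_width (DS_gamma s D gamma) <=
   (6 * gamma^-1 * Num.sqrt (s%:R * rho * ln (Num.sqrt 2 * n%:R / s%:R)))%:E)%E.
Proof.
move=> s1 sn g0 g1 hD.
have s0 : 0 < s%:R :> R by rewrite ltr0n.
have sn' : s%:R <= n%:R :> R by rewrite ler_nat.
have g_ge1 : 1 <= gamma^-1 by rewrite invf_ge1 // ltW.
set c := (1 + gamma^-1) * Num.sqrt s%:R.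
have c0 : 0 <= c by rewrite mulr_ge0 ?sqrtr_ge0 //; lra.
have hX (x : 'rV[R]_n) : S_gamma s gamma x -> \sum_i x 0 i ^+ 2 <= 1 /\ \sum_i `|x 0 i| <= c.
  by move=> Sx; split; [case: Sx => -> _ | exact: S_gamma_l1].
have [rho_le0|rho_gt0] := lerP rho 0.
  apply: le_trans (gaussian_width_mulmx_le0 _ _ _ _ (fun i => le_trans (hD i) rho_le0)) _.
  by rewrite lee_fin mulr_ge0 ?sqrtr_ge0 //; lra.
have [n_small|n_large] := lerP (n%:R : R) (2 * s%:R).
- have mu0 : 0 < (Num.sqrt rho)^-1 by rewrite invr_gt0 sqrtr_gt0.
  have t0 : 0 < Num.sqrt (8 * n%:R * rho) by rewrite sqrtr_gt0 !mulr_gt0 //; lra.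
  apply: le_trans (gaussian_width_mulmx_le _ _ _ _ _ _ _ _ _ c0 (lexx 0) mu0 t0 hX hD) _.
  rewrite lee_fin; apply: width_majorant_small => //; first lra.
  exact: le_ln_ratio_small.
- have l_ge := ln_ratio_ge_half _ _ s0 (ltW n_large).
  set l := ln (Num.sqrt 2 * n%:R / s%:R) in l_ge *.
  have l0 : 0 < l by lra.
  have mu0 : 0 < Num.sqrt (2 * l / rho) by rewrite sqrtr_gt0 !mulr_gt0 ?invr_gt0.
  have t0 : 0 < Num.sqrt (s%:R * rho / l) by rewrite sqrtr_gt0 !mulr_gt0 ?invr_gt0.
  apply: le_trans (gaussian_width_mulmx_le _ _ _ _ _ _ _ _ _ c0 (sqrtr_ge0 (2 * rho * l))
    mu0 t0 hX hD) _.
  rewrite lee_fin; apply: width_majorant_large => //.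
  by rewrite lnK // posrE !mulr_gt0 ?invr_gt0 ?sqrtr_gt0 //; lra.
Qed.
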